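(* Let $(M,d)$ be a metric space, $\mathsf{P}\subseteq M$ a set of $n$ points, and $1\le\ell\le k\le n$ integers; put $m=\lfloor k/\ell\rfloor$. Let $Q=\{q_1,\dots,q_m\}$ be the output of Gonzalez's algorithm on $\mathsf{P}$ with $m$ centers, and let $C\subseteq\mathsf{P}$ be any set with $|C|=k$ and $C\supseteq\bigcup_{i=1}^m N_{\mathsf{P}}(q_i,\ell)$. Let $r_{\mathrm{opt}}=\min_{C'\subseteq\mathsf{P},|C'|=k}\max_{p\in\mathsf{P}} d_{C'}(p,\ell)$. Then $\max_{p\in\mathsf{P}} d_C(p,\ell)\le 4\,r_{\mathrm{opt}}$, and if moreover $\ell\mid k$ then $\max_{p\in\mathsf{P}} d_C(p,\ell)\le 3\,r_{\mathrm{opt}}$.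
   Context: Gonzalez's algorithm with $m$ centers: $q_1\in\mathsf{P}$ is arbitrary, and for $i=2,\dots,m$, $q_i$ is a point of $\mathsf{P}$ maximizing $d(p,\{q_1,\dots,q_{i-1}\})$ over $p\in\mathsf{P}$. For a finite $S\subseteq M$ and $1\le i\le|S|$, $d_S(p,i)$ is the radius of the smallest closed ball centered at $p$ containing at least $i$ points of $S$; nearest neighbors are ordered lexicographically by $(d(p,s),\text{index of }s)$ (points of $\mathsf{P}=\{p_1,\dots,p_n\}$ are indexed) and $N_S(p,i)$ is the set of the first $i$ points of $S$ in this order, $|N_S(p,i)|=i$. The quantity $\max_{p\in\mathsf{P}} d_C(p,\ell)$ is the fault-tolerant $k$-center cost of $C$. *)

From HB Require Import structures.
From mathcomp Require Import all_boot all_order all_algebra.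
Set Implicit Arguments. Unset Strict Implicit. Unset Printing Implicit Defensive.
Import Order.TTheory GRing.Theory Num.Theory.
Local Open Scope ring_scope.

Definition is_metric (R : realFieldType) (T : Type) (d : T -> T -> R) : Prop :=
  [/\ forall x, d x x = 0,
      forall x y, d x y = 0 -> x = y,
      forall x y, d x y = d y x &
      forall x y z, d x z <= d x y + d y z].

Section FT.
Variables (R : realFieldType) (T : Type) (d : T -> T -> R) (n : nat)
          (p : 'I_n -> T).
(* The point set P = {p_0, ..., p_{n-1}}, points indexed by 'I_n; subsets of P
   are represented by sets of indices. *)

Definition ball_count (S : {set 'I_n}) (x : T) (r : R) : nat :=
  #|[set s in S | d x (p s) <= r]|.

(* d_S(x,i): radius of the smallest closed ball centred at x containing at
   least i points of S (the minimum is attained at one of the distances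
   d(x,s), s in S).  The default of the big min, the largest distance to S,
   is itself a candidate whenever 1 <= i <= |S|. *)
Definition dS (S : {set 'I_n}) (x : T) (i : nat) : R :=
  \big[Order.min / \big[Order.max/0]_(s in S) d x (p s)]_(s in S |
      (i <= ball_count S x (d x (p s)))%N) d x (p s).

Definition lex_lt (x : T) (s t : 'I_n) : bool :=
  (d x (p s) < d x (p t)) || ((d x (p s) == d x (p t)) && (s < t)%N).

(* N_S(x,i): the first i points of S in the lexicographic order *)
Definition NS (S : {set 'I_n}) (x : T) (i : nat) : {set 'I_n} :=
  [set s in S | (#|[set t in S | lex_lt x t s]| < i)%N].

Definition ft_cost (C : {set 'I_n}) (l : nat) : R :=
  \big[Order.max/0]_(y < n) dS C (p y) l.

(* d(x, {q_0, ..., q_{j-1}}) for j >= 1 (default d(x,q_0) is a member) *)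
Definition dist_prefix (q : nat -> 'I_n) (j : nat) (x : T) : R :=
  \big[Order.min / d x (p (q 0%N))]_(i < j) d x (p (q i)).

Definition gonzalez (q : nat -> 'I_n) (m : nat) : Prop :=
  forall j : nat, (0 < j)%N -> (j < m)%N ->
    forall y : 'I_n, dist_prefix q j (p y) <= dist_prefix q j (p (q j)).

End FT.

From HB Require Import structures.
From mathcomp Require Import all_boot all_order all_algebra.
From mathcomp Require Import lra zify.
Import Order.TTheory GRing.Theory Num.Theory.
Local Open Scope ring_scope.

(* Let r be the fault-tolerant cost of an arbitrary k-set C'
   and m = k %/ l.  We show the stronger bound ft_cost C <= 3 r, which gives
   both claims (4 r >= 3 r since r >= 0).  Fix a point y.
   - If d(y, q_i) <= 2r for some center q_i: since C' has l points within r
     of q_i, the l nearest points N_P(q_i, l) (all in C) are within r of q_i,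
     hence within 3r of y, so d_C(y, l) <= 3r.
   - Otherwise y and q_0, ..., q_{m-1} are m+1 points pairwise more than 2r
     apart (Gonzalez's farthest-point rule transfers the separation of y to
     the centers).  The balls of radius r around them are disjoint and each
     holds l points of C', so (m+1) l <= k, contradicting m = k %/ l.  Only symmetry and the triangle inequality of d are used. *)

Section FaultTolerantCost.
Variables (R : realFieldType) (T : Type) (d : T -> T -> R) (n : nat)
          (p : 'I_n -> T).

Lemma ball_count_mono (S : {set 'I_n}) x r1 r2 :
  r1 <= r2 -> (ball_count d p S x r1 <= ball_count d p S x r2)%N.
Proof.
move=> r12; apply/subset_leq_card/subsetP => s; rewrite !inE.
by case/andP=> -> /le_trans; apply.
Qed.

Lemma dS_ball (S : {set 'I_n}) x l r :
  (l <= #|S|)%N -> dS d p S x l <= r -> (l <= ball_count d p S x r)%N.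
Proof.
move=> lS; apply: contraTT; rewrite -ltnNge -ltNge => few.
apply: lt_bigmin => [|s /andP[sS many]].
- have [s sS far] : exists2 s, s \in S & r < d x (p s).
    apply/exists_inP; apply: contraLR few; rewrite negb_exists_in -leqNgt.
    move/forall_inP => near; apply: leq_trans lS (subset_leq_card _).
    by apply/subsetP => s sS; rewrite inE sS leNgt near.
  exact: lt_le_trans far (le_bigmax_cond _ _ sS).
- rewrite ltNge; apply/negP => sr.
  by have := @ball_count_mono S x _ _ sr; lia.
Qed.

(* Conversely, l >= 1 points of S within rho of x force d_S(x,l) <= rho:
   the farthest of them is a candidate radius in the minimum defining d_S. *)
Lemma dS_le (S : {set 'I_n}) x l rho :
  (0 < l)%N -> (l <= ball_count d p S x rho)%N -> dS d p S x l <= rho.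
Proof.
move=> l0; rewrite /ball_count; set A := [set s in S | d x (p s) <= rho] => lA.
have [a aA] : exists a, a \in A by apply/set0Pn; rewrite -card_gt0; lia.
case: (arg_maxP (fun s => d x (p s)) aA) => s sA smax.
have : s \in A := sA; rewrite /A inE => /andP[sS srho].
apply: le_trans srho; apply: bigmin_le_cond; rewrite sS /=.
apply: leq_trans lA (subset_leq_card _); apply/subsetP => t tA.
by move: (tA); rewrite /A !inE => /andP[-> _]; exact: (smax t tA).
Qed.

Lemma lex_lt_trans x s t u :
  lex_lt d p x s t -> lex_lt d p x t u -> lex_lt d p x s u.
Proof.
rewrite /lex_lt.
case/orP=> [h1|/andP[/eqP e1 h1]]; case/orP=> [h2|/andP[/eqP e2 h2]].
- by rewrite (lt_trans h1 h2).
- by rewrite -e2 h1.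
- by rewrite e1 h2.
- by rewrite e1 e2 eqxx (ltn_trans h1 h2) orbT.
Qed.

Lemma lex_lt_irr x s : lex_lt d p x s s = false.
Proof. by rewrite /lex_lt ltxx ltnn andbF. Qed.

(* N_P(x,l) has at least l elements when l <= n: an element outside it of
   minimal rank would have all its predecessors inside, hence rank < l. *)
Lemma NS_card x l : (l <= n)%N -> (l <= #|NS d p setT x l|)%N.
Proof.
move=> ln; rewrite leqNgt; apply/negP => small.
set N := NS d p setT x l in small.
pose preds u := [set t in setT | lex_lt d p x t u].
have [u0 u0N] : exists u0, u0 \in ~: N.
  by apply/set0Pn; rewrite -card_gt0 cardsCs card_ord setCK; lia.
case: (arg_minnP (fun u => #|preds u|) u0N) => u uN umin.
have predN : preds u \subset N.
  apply/subsetP => t; rewrite !inE /= => tu; apply/negPn/negP => tN.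
  have : (#|preds t| < #|preds u|)%N.
    apply/proper_card/properP; split.
      by apply/subsetP => v; rewrite !inE /= => vt; apply: lex_lt_trans vt tu.
    by exists t; rewrite !inE /= ?lex_lt_irr.
  have tN' : t \in ~: N by rewrite in_setC /N inE in_setT.
  by rewrite ltnNge (umin t tN').
have : u \in ~: N := uN; rewrite in_setC inE in_setT /= => /negP; apply.
exact: leq_ltn_trans (subset_leq_card predN) small.
Qed.

Lemma NS_close (C' : {set 'I_n}) x l r s :
  (l <= ball_count d p C' x r)%N -> s \in NS d p setT x l -> d x (p s) <= r.
Proof.
move=> lball; rewrite inE in_setT /= => rank; rewrite leNgt; apply/negP => far.
move: rank; rewrite ltnNge => /negP; apply.
apply: leq_trans lball (subset_leq_card _); apply/subsetP => t.
by rewrite !inE /= => /andP[_ tr]; rewrite /lex_lt (le_lt_trans tr far).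
Qed.

Hypothesis dsym : forall x y, d x y = d y x.
Hypothesis dtri : forall x y z, d x z <= d x y + d y z.

Lemma dS_near_center (C C' : {set 'I_n}) y z l r :
  (0 < l)%N -> (l <= n)%N -> NS d p setT (p z) l \subset C ->
  (l <= ball_count d p C' (p z) r)%N -> d (p y) (p z) <= 2%:R * r ->
  dS d p C (p y) l <= 3%:R * r.
Proof.
move=> l0 ln NC zball yz; apply: dS_le => //.
rewrite /ball_count; apply: leq_trans (NS_card (p z) l ln) (subset_leq_card _).
apply/subsetP => s sN; rewrite inE (subsetP NC s sN) /=.
have := @NS_close C' _ _ _ _ zball sN; have := dtri (p y) (p z) (p s); lra.
Qed.

(* Separation: if some y is farther than rho from every center of a Gonzalez
   run, then the centers are pairwise farther than rho apart, since each new
   center is at least as far from the previous ones as y is. *)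
Lemma gonzalez_separated (q : nat -> 'I_n) m y rho :
  gonzalez d p q m -> (forall i, (i < m)%N -> rho < d (p y) (p (q i))) ->
  forall i j, (i < j)%N -> (j < m)%N -> rho < d (p (q i)) (p (q j)).
Proof.
move=> gz yfar i j ij jm.
have yprefix : rho < dist_prefix d p q j (p y).
  apply: lt_bigmin => [|i0 _]; first by apply: yfar; lia.
  by apply: yfar; apply: ltn_trans (ltn_ord i0) jm.
have jprefix : dist_prefix d p q j (p (q j)) <= d (p (q j)) (p (q i)) :=
  bigmin_le _ (Ordinal ij) (fun i0 : 'I_j => d (p (q j)) (p (q i0))).
rewrite dsym; apply: lt_le_trans yprefix (le_trans (gz j _ jm y) jprefix).
exact: leq_ltn_trans (leq0n i) ij.
Qed.

(* Packing: j points pairwise more than 2r apart, each with l points of C'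
   within r, have disjoint such neighbourhoods, so j * l <= |C'|. *)
Lemma packing (C' : {set 'I_n}) (x : nat -> T) (j l : nat) r :
  (forall i i', (i < i')%N -> (i' < j)%N -> 2%:R * r < d (x i) (x i')) ->
  (forall i, (i < j)%N -> (l <= ball_count d p C' (x i) r)%N) ->
  (j * l <= #|C'|)%N.
Proof.
move=> sep lball.
pose D i := [set s in C' | d (x i) (p s) <= r].
suff U : (j * l <= #|\bigcup_(i < j) D i|)%N.
  apply: leq_trans U (subset_leq_card _).
  by apply/bigcupsP => i _; apply/subsetP => s; rewrite inE => /andP[].
elim: j sep lball => [|j IH] sep lball; first by rewrite mul0n.
rewrite big_ord_recr /= cardsU.
have -> : \bigcup_(i < j) D i :&: D j = set0.
  apply/setP => s; rewrite in_set0 in_setI; apply/negP.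
  case/andP => /bigcupP[i _]; rewrite !inE => /andP[_ ids] /andP[_ jds].
  have := sep i j (ltn_ord i) (ltnSn j); have := dtri (x i) (p s) (x j).
  rewrite (dsym (p s) (x j)); lra.
rewrite cards0 subn0 mulSn addnC; apply: leq_add (lball j (ltnSn j)).
by apply: IH => [i i' ii' i'j|i ij]; [apply: sep; lia|apply: lball; lia].
Qed.

Lemma ft_cost_le3 (l k : nat) (q : nat -> 'I_n) (C C' : {set 'I_n}) :
  (1 <= l)%N -> (l <= k)%N -> (k <= n)%N -> gonzalez d p q (k %/ l) ->
  (forall i, (i < k %/ l)%N -> NS d p setT (p (q i)) l \subset C) ->
  #|C'| = k -> ft_cost d p C l <= 3%:R * ft_cost d p C' l.
Proof.
move=> l1 lk kn gz NC C'k; set m := (k %/ l)%N; set r := ft_cost d p C' l.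
have r0 : 0 <= r := bigmax_ge_id _ _ _ _.
have lball z : (l <= ball_count d p C' (p z) r)%N.
  by apply: dS_ball; rewrite ?C'k //; apply: le_bigmax.
apply: bigmax_le => [|y _]; first lra.
case: (boolP [exists i : 'I_m, d (p y) (p (q i)) <= 2%:R * r]).
  case/existsP => i near.
  exact: dS_near_center l1 (leq_trans lk kn) (NC i (ltn_ord i)) (lball _) near.
move/existsPn => far.
have yfar i : (i < m)%N -> 2%:R * r < d (p y) (p (q i)).
  by move=> im; rewrite ltNge; apply: (far (Ordinal im)).
pose x i := if (i < m)%N then p (q i) else p y.
have : (m.+1 * l <= k)%N.
  rewrite -C'k; apply: (@packing C' x) => [i i' ii' i'm|i _]; last first.
    by rewrite /x; case: ifP.
  have im : (i < m)%N by lia.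
  rewrite /x im; case: ltnP => i'm'.
  - exact: gonzalez_separated gz yfar _ _ ii' i'm'.
  - by rewrite dsym; apply: yfar.
by rewrite leqNgt -ltn_divLR; [rewrite ltnSn | lia].
Qed.

End FaultTolerantCost.

Theorem theorem3 (R : realFieldType) (T : Type) (d : T -> T -> R)
  (n : nat) (p : 'I_n -> T) (l k : nat) (q : nat -> 'I_n) (C : {set 'I_n}) :
  is_metric d -> injective p ->
  (1 <= l)%N -> (l <= k)%N -> (k <= n)%N ->
  gonzalez d p q (k %/ l) ->
  #|C| = k ->
  (forall i : nat, (i < k %/ l)%N -> NS d p setT (p (q i)) l \subset C) ->
  forall C' : {set 'I_n}, #|C'| = k ->
    ft_cost d p C l <= 4%:R * ft_cost d p C' l /\
    ((l %| k)%N -> ft_cost d p C l <= 3%:R * ft_cost d p C' l).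
Proof.
move=> [_ _ dsym dtri] _ l1 lk kn gz _ NC C' C'k.
have le3 := @ft_cost_le3 _ _ _ _ _ dsym dtri _ _ _ _ _ l1 lk kn gz NC C'k.
have r0 : 0 <= ft_cost d p C' l := bigmax_ge_id _ _ _ _.
by split => [|_] //; apply: le_trans le3 _; lra.
Qed.
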